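(* In each of the following cases there exists an ascending partition $\mathcal P=[p_1,\dots,p_k]\in AP_{n,k}$ with $p_1=\cdots=p_e=2$ and $p_{e+1}=\cdots=p_{e+f}=3$ (i.e. completing the partial partition $[2^e,3^f]$) such that $\mathcal P$ is non-equitable and $\mathrm{slack}(\mathcal P)\ge 0$: (a) $n=6t+3$, $k=2t+1$, $e=\frac32 t$, $f=2$, for every even $t\ge 6$; (b) $n=6t+3$, $k=2t+1$, $e=\frac32 t-\frac12$, $f=3$, for every odd $t\ge 7$; (c) $n=6t+2$, $k=2t+1$, $e=\frac32 t$, $f=3$, for every even $t\ge 10$; (d) $n=6t+2$, $k=2t+1$, $e=\frac32 t+\frac12$, $f=2$, for every odd $t\ge 11$.
   Context: $[n]=\{1,\ldots,n\}$ and $s^{n,k}=\frac{n(n+1)}{2k}$. An ascending partition of $n$ of size $k$ is a sequence of positive integers $[p_1,\ldots,p_k]$ with $p_1\le\cdots\le p_k$ and $\sum_i p_i=n$; $AP_{n,k}$ is the set of all such partitions when $s^{n,k}$ is an integer (and empty otherwise). $\mathcal P$ is equitable if $[n]$ can be partitioned into sets $A_1,\dots,A_k$ with $|A_i|=p_i$ all having the same element sum. For $j=1,\ldots,k$, $\mathrm{slack}_j(\mathcal P)=\sum_{i=1}^{p_1+\cdots+p_j}(n-i+1)-j\,s^{n,k}$, and $\mathrm{slack}(\mathcal P)=\min_{1\le j\le k-1}\mathrm{slack}_j(\mathcal P)$. *)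

From mathcomp Require Import all_boot all_order all_algebra.
Set Implicit Arguments. Unset Strict Implicit. Unset Printing Implicit Defensive.
Import Order.TTheory GRing.Theory Num.Theory.

(* An ascending partition of n of size k: a sequence of k positive integers,
   nondecreasing, summing to n.  p_i (1-based) is [nth 0 P (i-1)]. *)
Definition asc_partition (n k : nat) (P : seq nat) : bool :=
  [&& size P == k, all (fun p => 0 < p) P, sorted leq P & sumn P == n].

(* AP_{n,k}: ascending partitions of n of size k, empty unless
   s^{n,k} = n(n+1)/(2k) is an integer. *)
Definition in_AP (n k : nat) (P : seq nat) : bool :=
  ((2 * k) %| n * n.+1) && asc_partition n k P.

(* s^{n,k} (used when it is an integer) *)
Definition snk (n k : nat) : nat := (n * n.+1) %/ (2 * k).

(* Equitable: [n] = {1..n} can be partitioned into A_1..A_k with |A_i| = p_i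
   and all A_i having the same element sum.  The partition is encoded by the
   map f sending element x.+1 (x : 'I_n) to the index (0-based) of its block. *)
Definition equitable (n k : nat) (P : seq nat) : Prop :=
  exists f : 'I_n -> 'I_k,
    (forall i : 'I_k, #|[set x | f x == i]| = nth 0 P i) /\
    (forall i j : 'I_k,
        \sum_(x | f x == i) (x : nat).+1 = \sum_(x | f x == j) (x : nat).+1).

Definition slack_j (n k : nat) (P : seq nat) (j : nat) : int :=
  (\sum_(1 <= i < (sumn (take j P)).+1) (n.+1 - i))%:Z - (j * snk n k)%:Z.

Definition slack (n k : nat) (P : seq nat) : int :=
  \big[Order.min/slack_j n k P 1]_(1 <= j < k) slack_j n k P j.

Definition completes (e f : nat) (P : seq nat) : Prop :=
  (forall i, i < e -> nth 0 P i = 2) /\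
  (forall i, e <= i < e + f -> nth 0 P i = 3).

Definition good_completion (n k e f : nat) : Prop :=
  exists P : seq nat,
    in_AP n k P /\ completes e f P /\ ~ equitable n k P /\ (0 <= slack n k P)%R.

From mathcomp Require Import all_boot all_order all_algebra zify ring.
Import Order.TTheory GRing.Theory Num.Theory.

(* The witness is [2^e, 3^f, 6^b, L] with a last part [L] between 9 and 11.
   If all blocks have the common sum [s = n(n+1)/(2k)], both elements of a
   2-block and at least one element of a 3-block are at least [s - n]; but only
   [2n + 1 - s < 2e + f] elements of [{1..n}] are that large, so the partition
   is not equitable.  Its slack is nonnegative because each prefix sum
   [m = p_1 + ... + p_j] satisfies [2js <= m(2n + 1 - m)], i.e. the [m] largest
   elements of [{1..n}] already sum to at least [js]. *)

Set Implicit Arguments.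
Unset Strict Implicit.
Unset Printing Implicit Defensive.

Lemma sum_ord_succ n : 2 * \sum_(x < n) (x : nat).+1 = n * n.+1.
Proof.
elim: n => [|n IHn]; first by rewrite big_ord0.
by rewrite big_ord_recr /= mulnDr IHn; ring.
Qed.

Lemma double_sum_top n m : m <= n ->
  2 * \sum_(1 <= i < m.+1) (n.+1 - i) = m * (2 * n + 1 - m).
Proof.
elim: m => [|m IHm] le_mn; first by rewrite big_geq.
rewrite big_nat_recr //= mulnDr IHm; last exact: ltnW.
have [d ->] : exists d, n = m.+1 + d by exists (n - m.+1); lia.
have -> : 2 * (m.+1 + d) + 1 - m = m + 2 * d + 3 by lia.
have -> : (m.+1 + d).+1 - m.+1 = d + 1 by lia.
have -> : 2 * (m.+1 + d) + 1 - m.+1 = m + 2 * d + 2 by lia.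
ring.
Qed.

Lemma sum_ord_weights k e f :
  \sum_(i < k) (if i < e then 2 else (i < e + f) : nat) =
  2 * minn k e + (minn k (e + f) - minn k e).
Proof.
elim: k => [|k IHk]; first by rewrite big_ord0 !min0n.
by rewrite big_ord_recr /= IHk; case: (ltnP k e); case: (ltnP k (e + f)); lia.
Qed.

Lemma card_ord_succ_geq n a : #|[set x : 'I_n | a <= x.+1]| = n - a.-1.
Proof.
rewrite -sum1_card big_mkcond /=; under eq_bigr do rewrite inE.
elim: n => [|n IHn]; first by rewrite big_ord0.
by rewrite big_ord_recr /= IHn; case: leqP; lia.
Qed.

Section BlockSums.

Variable n : nat.
Implicit Types (B : {set 'I_n}) (x : 'I_n).

Lemma sum_set_le_mem B x :
  x \in B -> \sum_(z in B) (z : nat).+1 <= x.+1 + #|B|.-1 * n.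
Proof.
move=> xB; rewrite (big_setD1 x xB) leq_add2l (cardsD1 x B) xB add1n /=.
by rewrite -sum_nat_const; apply: leq_sum => z _; exact: ltn_ord.
Qed.

Lemma sum_card3_small B a :
  #|B| = 3 -> {in B, forall z : 'I_n, z.+1 < a} ->
  \sum_(z in B) (z : nat).+1 + 6 <= 3 * a.
Proof.
move=> cardB small.
have [x xB] : exists x, x \in B by apply/card_gt0P; rewrite cardB.
have /cards2P [y [z [yz DB]]] : #|B :\ x| == 2.
  by move: cardB; rewrite (cardsD1 x) xB add1n => -[->].
have : y \in B :\ x by rewrite DB !inE eqxx.
have : z \in B :\ x by rewrite DB !inE eqxx orbT.
rewrite !inE => /andP[zx zB] /andP[yx yB].
have yz1 : y \notin [set z] by rewrite inE.
rewrite (big_setD1 x xB) DB (big_setU1 _ yz1) big_set1 /=.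
have := small x xB; have := small y yB; have := small z zB.
move: yz yx zx; rewrite -!val_eqE /=; lia.
Qed.

End BlockSums.

Lemma equitable_block_sum n k (g : 'I_n -> 'I_k) (i : 'I_k) :
  (forall i j : 'I_k,
      \sum_(x | g x == i) (x : nat).+1 = \sum_(x | g x == j) (x : nat).+1) ->
  2 * k * \sum_(x | g x == i) (x : nat).+1 = n * n.+1.
Proof.
move=> eq_sums; rewrite -sum_ord_succ [X in _ = 2 * X](partition_big g xpredT) //=.
have -> : \sum_(j < k) \sum_(x | g x == j) (x : nat).+1 =
          k * \sum_(x | g x == i) (x : nat).+1.
  transitivity (\sum_(j < k) \sum_(x | g x == i) (x : nat).+1).
    by apply: eq_bigr => j _; exact: eq_sums.
  by rewrite sum_nat_const card_ord.
by rewrite mulnA.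
Qed.

Lemma not_equitable_completion n k e f s P :
  0 < k -> e + f <= k -> n * n.+1 = 2 * k * s -> completes e f P ->
  n < s <= 2 * n -> 3 * (s - n) < s + 6 -> 2 * n + 1 < s + 2 * e + f ->
  ~ equitable n k P.
Proof.
move=> k_gt0 efk ns [P2 P3] s_bounds small3 many [g [card_g sum_g]].
set W := [set x : 'I_n | s - n <= x.+1].
set block := fun i : 'I_k => [set x | g x == i].
have block_sum (i : 'I_k) : \sum_(x in block i) (x : nat).+1 = s.
  apply/eqP; rewrite -(eqn_pmul2l (_ : 0 < 2 * k)) ?muln_gt0 //.
  by rewrite -ns -(equitable_block_sum i sum_g); under eq_bigl do rewrite inE.
have pair_in_W (i : 'I_k) : i < e -> block i \subset W.
  move=> lt_ie; apply/subsetP => x xB; rewrite inE.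
  have := sum_set_le_mem xB; rewrite block_sum card_g P2 //; lia.
have triple_meets_W (i : 'I_k) : e <= i < e + f -> 0 < #|W :&: block i|.
  move=> hi; rewrite card_gt0; apply/set0Pn.
  have [x xWB | none] := pickP [pred x | x \in W :&: block i]; first by exists x.
  suff : s + 6 <= 3 * (s - n) by lia.
  have card3 : #|block i| = 3 by rewrite card_g P3.
  rewrite -[X in X + 6](block_sum i); apply: sum_card3_small card3 _ => z.
  by rewrite inE => gz; move: (none z); rewrite /= !inE gz andbT ltnNge => ->.
have W_split : #|W| = \sum_(i : 'I_k) #|W :&: block i|.
  rewrite -sum1_card (partition_big g xpredT) //=.
  by apply: eq_bigr => i _; rewrite -sum1_card; apply: eq_bigl => x; rewrite !inE.
have : \sum_(i < k) (if i < e then 2 else (i < e + f) : nat) <= #|W|.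
  rewrite W_split; apply: leq_sum => i _; case: ifP => lt_ie.
    by rewrite (setIidPr (pair_in_W i lt_ie)) card_g P2.
  case hi : (i < e + f) => //; apply: triple_meets_W.
  by rewrite hi andbT leqNgt lt_ie.
rewrite sum_ord_weights card_ord_succ_geq; lia.
Qed.

Lemma slack_j_ge0 n k P j :
  sumn (take j P) <= n ->
  2 * j * snk n k <= sumn (take j P) * (2 * n + 1 - sumn (take j P)) ->
  (0 <= slack_j n k P j)%R.
Proof.
move=> le_n le_sum; rewrite /slack_j subr_ge0 lez_nat.
by rewrite -(@leq_pmul2l 2) // double_sum_top // mulnA.
Qed.

Lemma slack_ge0 n k P :
  1 < k -> (forall j, 0 < j < k -> (0 <= slack_j n k P j)%R) ->
  (0 <= slack n k P)%R.
Proof.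
move=> k_gt1 slack_jP; rewrite /slack big_seq.
apply: (big_ind (fun x : int => 0 <= x)%R); first by apply: slack_jP; lia.
  by move=> x y x_ge0 y_ge0; rewrite le_min x_ge0 y_ge0.
by move=> j; rewrite mem_index_iota => hj; apply: slack_jP; lia.
Qed.

Lemma sumn_take_nseq j a x (s : seq nat) :
  sumn (take j (nseq a x ++ s)) =
  if j <= a then x * j else x * a + sumn (take (j - a) s).
Proof.
rewrite take_cat size_nseq; case: ltnP => [lt_ja | le_aj].
  by rewrite take_nseq ?sumn_nseq ltnW.
rewrite sumn_cat sumn_nseq; case: (leqP j a) => // le_ja.
have -> : j = a by lia.
by rewrite subnn take0 /= addn0.
Qed.

Lemma sorted_nseq_cat a x (s : seq nat) :
  sorted leq s -> all (leq x) s -> sorted leq (nseq a x ++ s).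
Proof.
move=> s_sorted s_ge; elim: a => [|a IHa] //=.
rewrite path_sortedE; last exact: leq_trans.
by rewrite IHa all_cat all_nseq leqnn orbT s_ge.
Qed.

Definition partition236 (e f b L : nat) : seq nat :=
  nseq e 2 ++ nseq f 3 ++ nseq b 6 ++ [:: L].

Lemma asc_partition236 e f b L : 6 <= L ->
  asc_partition (2 * e + 3 * f + 6 * b + L) (e + f + b + 1) (partition236 e f b L).
Proof.
move=> L_ge; rewrite /asc_partition /partition236.
rewrite !size_cat !size_nseq !all_cat !all_nseq !sumn_cat !sumn_nseq /=.
rewrite !orbT (leq_trans _ L_ge) //= addn0 !addnA !eqxx andbT /=.
apply: sorted_nseq_cat; last by rewrite !all_cat !all_nseq /= !orbT (leq_trans _ L_ge).
apply: sorted_nseq_cat; last by rewrite !all_cat !all_nseq /= !orbT (leq_trans _ L_ge).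
by apply: sorted_nseq_cat; rewrite //= L_ge.
Qed.

Lemma completes_partition236 e f b L : completes e f (partition236 e f b L).
Proof.
split=> i hi; rewrite /partition236 nth_cat size_nseq nth_nseq; first by rewrite hi.
case/andP: hi => le_ei lt_i; rewrite ltnNge le_ei /= nth_cat size_nseq nth_nseq.
by rewrite ltn_subLR // lt_i.
Qed.

Lemma good_completion_partition236 n k e f b L s :
  k = e + f + b + 1 -> n = 2 * e + 3 * f + 6 * b + L -> 6 <= L -> 0 < e ->
  n * n.+1 = 2 * k * s -> n < s <= 2 * n -> 3 * (s - n) < s + 6 ->
  2 * n + 1 < s + 2 * e + f -> s + 2 * e <= 2 * n + 1 ->
  (forall i, 0 < i <= f ->
     2 * (e + i) * s <= (2 * e + 3 * i) * (2 * n + 1 - (2 * e + 3 * i))) ->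
  (forall i, 0 < i <= b ->
     2 * (e + f + i) * s <=
     (2 * e + 3 * f + 6 * i) * (2 * n + 1 - (2 * e + 3 * f + 6 * i))) ->
  good_completion n k e f.
Proof.
move=> def_k def_n L_ge e_gt0 ns s_bounds small3 many slack2 slack3 slack6.
have snk_s : snk n k = s by rewrite /snk ns mulKn // def_k; lia.
exists (partition236 e f b L); split; [|split; [|split]].
- by rewrite /in_AP ns dvdn_mulr // def_k def_n asc_partition236.
- exact: completes_partition236.
- by apply: (not_equitable_completion _ _ ns (completes_partition236 e f b L)); lia.
apply: slack_ge0; first lia.
move=> j hj; apply: slack_j_ge0; rewrite ?snk_s /partition236 !sumn_take_nseq;
  (case: ifP => le_je; [|case: ifP => le_jef; [|case: ifP => le_jb]]); try lia.
- by apply: leq_mul => //; lia.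
- by have := slack3 (j - e); rewrite subnKC; [apply; lia | lia].
- have := slack6 (j - e - f); have -> : e + f + (j - e - f) = j by lia.
  by rewrite !addnA; apply; lia.
Qed.

Lemma good_completion_a t : ~~ odd t -> 6 <= t ->
  good_completion (6 * t + 3) (2 * t + 1) ((3 * t) %/ 2) 2.
Proof.
move=> t_even t_ge; have [u def_t] : exists u, t = 2 * u.
  by exists t./2; rewrite mul2n even_halfK.
subst t; apply: (@good_completion_partition236 _ _ _ _ (u - 2) 9 (18 * u + 6)); try lia.
- by move=> i /andP[]; case: i => [|[|[|]]] //; nia.
- by move=> i hi; nia.
Qed.

Lemma good_completion_b t : odd t -> 7 <= t ->
  good_completion (6 * t + 3) (2 * t + 1) ((3 * t - 1) %/ 2) 3.
Proof.
move=> t_odd t_ge; have [u def_t] : exists u, t = 2 * u + 1.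
  by exists t./2; have := odd_halfK t_odd; lia.
subst t; apply: (@good_completion_partition236 _ _ _ _ (u - 2) 10 (18 * u + 15)); try lia.
- by move=> i /andP[]; case: i => [|[|[|[|]]]] //; nia.
- by move=> i hi; nia.
Qed.

Lemma good_completion_c t : ~~ odd t -> 10 <= t ->
  good_completion (6 * t + 2) (2 * t + 1) ((3 * t) %/ 2) 3.
Proof.
move=> t_even t_ge; have [u def_t] : exists u, t = 2 * u.
  by exists t./2; rewrite mul2n even_halfK.
subst t; apply: (@good_completion_partition236 _ _ _ _ (u - 3) 11 (18 * u + 3)); try lia.
- by move=> i /andP[]; case: i => [|[|[|[|]]]] //; nia.
- by move=> i hi; nia.
Qed.

Lemma good_completion_d t : odd t -> 11 <= t ->
  good_completion (6 * t + 2) (2 * t + 1) ((3 * t + 1) %/ 2) 2.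
Proof.
move=> t_odd t_ge; have [u def_t] : exists u, t = 2 * u + 1.
  by exists t./2; have := odd_halfK t_odd; lia.
subst t; apply: (@good_completion_partition236 _ _ _ _ (u - 2) 10 (18 * u + 12)); try lia.
- by move=> i /andP[]; case: i => [|[|[|]]] //; nia.
- by move=> i hi; nia.
Qed.

Theorem mainTheorem3 :
  (forall t : nat, ~~ odd t -> 6 <= t ->
     good_completion (6 * t + 3) (2 * t + 1) ((3 * t) %/ 2) 2) /\
  (forall t : nat, odd t -> 7 <= t ->
     good_completion (6 * t + 3) (2 * t + 1) ((3 * t - 1) %/ 2) 3) /\
  (forall t : nat, ~~ odd t -> 10 <= t ->
     good_completion (6 * t + 2) (2 * t + 1) ((3 * t) %/ 2) 3) /\
  (forall t : nat, odd t -> 11 <= t ->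
     good_completion (6 * t + 2) (2 * t + 1) ((3 * t + 1) %/ 2) 2).
Proof.
split; first exact: good_completion_a.
split; first exact: good_completion_b.
split; first exact: good_completion_c.
exact: good_completion_d.
Qed.
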